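(* Let $t\geq 1$ and let $r_1,\ldots,r_t$ be positive integers with $\gcd(r_i,r_j)=1$ for all $i\neq j$. Let $F$ be the free group on $\{x_1,\ldots,x_t\}$ and let $S$ be the normal closure in $F$ of $\{x_1^{r_1},\ldots,x_t^{r_t}\}$ (so $F/S$ is the free product of the cyclic groups $\langle x_i\mid x_i^{r_i}\rangle\cong\mathbb{Z}_{r_i}$). Define $\rho_1(S)=S$ and $\rho_{n+1}(S)=[\rho_n(S),F]$ for $n\geq 1$. Then (i) $S\cap\gamma_2(F)=\rho_2(S)$; (ii) $S\cap\gamma_3(F)=\rho_3(S)$, and consequently $\rho_2(S)\cap\gamma_3(F)=\rho_3(S)$.
   Context: $\gamma_k(F)$ denotes the $k$-th term of the lower central series of $F$: $\gamma_1(F)=F$, $\gamma_{k+1}(F)=[\gamma_k(F),F]$. For subgroups $A,B$, $[A,B]$ is the subgroup generated by all commutators $[a,b]$, $a\in A$, $b\in B$. *)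

(* A concrete model of the free group F on
   generators x_0, ..., x_{t-1} (indexed by 'I_t) as words over letters
   (i, b) : 'I_t * bool, where (i, false) = x_i and (i, true) = x_i^-1.
   Two words denote the same element of F iff their free reductions coincide.
   Subsets of F are predicates on words closed under this equivalence. *)
From mathcomp Require Import all_boot.
Set Implicit Arguments. Unset Strict Implicit. Unset Printing Implicit Defensive.

Section FreeGroup.
Variable t : nat.

Definition letter := ('I_t * bool)%type.
Definition word := seq letter.

Definition linv (a : letter) : letter := (a.1, ~~ a.2).

Definition rcons_red (a : letter) (w : word) : word :=
  match w with
  | b :: w' => if b == linv a then w' else a :: w
  | [::] => [:: a]
  end.

Definition reduce (w : word) : word := foldr rcons_red [::] w.

Definition weq (u v : word) : Prop := reduce u = reduce v.

Definition wone : word := [::].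
Definition wmul (u v : word) : word := u ++ v.
Definition winv (u : word) : word := rev (map linv u).
Definition wconj (u g : word) : word := winv g ++ u ++ g.
Definition wcomm (u v : word) : word := winv u ++ winv v ++ u ++ v.

Definition gen_x (i : 'I_t) : word := [:: (i, false)].
Definition gen_pow (i : 'I_t) (n : nat) : word := nseq n (i, false).

Inductive subgen (X : word -> Prop) : word -> Prop :=
| subgen_base u : X u -> subgen X u
| subgen_one : subgen X wone
| subgen_mul u v : subgen X u -> subgen X v -> subgen X (wmul u v)
| subgen_inv u : subgen X u -> subgen X (winv u)
| subgen_eq u v : subgen X u -> weq u v -> subgen X v.

Definition normal_closure (X : word -> Prop) : word -> Prop :=
  subgen (fun w => exists u g, X u /\ w = wconj u g).

Definition commsub (A B : word -> Prop) : word -> Prop :=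
  subgen (fun w => exists a b, A a /\ B b /\ w = wcomm a b).

Definition Fall : word -> Prop := fun _ => True.

(* lower central series: gamma 1 = F, gamma (k+1) = [gamma k, F];
   (gamma 0 = F as a harmless junk value) *)
Fixpoint gamma (k : nat) : word -> Prop :=
  match k with
  | 0 | 1 => Fall
  | k'.+1 => commsub (gamma k') Fall
  end.

(* rho 1 S = S, rho (n+1) S = [rho n S, F]; (rho 0 S = S junk) *)
Fixpoint rho (S : word -> Prop) (n : nat) : word -> Prop :=
  match n with
  | 0 | 1 => S
  | n'.+1 => commsub (rho S n') Fall
  end.

Definition Srel (r : 'I_t -> nat) : word -> Prop :=
  normal_closure (fun w => exists i, w = gen_pow i (r i)).

Definition set_eq (A B : word -> Prop) : Prop := forall w, A w <-> B w.
Definition set_cap (A B : word -> Prop) : word -> Prop := fun w => A w /\ B w.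

End FreeGroup.

From Stdlib Require Import Setoid Morphisms ZArith Lia.
From mathcomp Require Import all_boot zify.
Set Implicit Arguments. Unset Strict Implicit. Unset Printing Implicit Defensive.

(* Modulo [S, F] the relators x_i^r_i are central, so every element of S is a product of
   their integer powers; the exponent sums, which vanish on gamma_2(F), force all these
   exponents to be 0 on S /\ gamma_2(F).
   Modulo [S, F, F] the commutator [s, f] with s in S is bilinear, so [S, F] is generated
   by the [x_i^r_i, x_j] with i <> j. The homomorphism from F to the integral Heisenberg
   group sending x_i, x_j to its two generators and every other x_k to 1 kills
   gamma_3(F) and sends [x_i^r_i, x_j]^a [x_j^r_j, x_i]^b to the central element
   r_i a - r_j b. If that is 0, coprimality gives a = r_j q and b = r_i q, and bilinearity
   turns the product into [x_i^r_i, x_j^r_j]^q [x_j^r_j, x_i^r_i]^q, which is trivial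
   modulo [S, F, F]. *)

Section FreeReduction.
Variable t : nat.
Implicit Types (a b : letter t) (u v w x : word t).

Lemma linvK a : linv (linv a) = a.
Proof. by case: a => i s; rewrite /linv /= negbK. Qed.

Fixpoint reduced w : bool :=
  match w with
  | a :: ((b :: _) as w') => (b != linv a) && reduced w'
  | _ => true
  end.

Lemma reduced_behead a w : reduced (a :: w) -> reduced w.
Proof. by case: w => //= b w /andP []. Qed.

Lemma reduced_rcons_red a w : reduced w -> reduced (rcons_red a w).
Proof.
case: w => [|b w] //= Hw; case: ifP => E; first exact: reduced_behead Hw.
by rewrite /= E Hw.
Qed.

Lemma rcons_redK a w : reduced w -> rcons_red a (rcons_red (linv a) w) = w.
Proof.
case: w => [|b w] /=; first by rewrite eqxx.
rewrite linvK; case: (eqVneq b a) => [->|neq_ba] Hw; last by rewrite /= eqxx.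
by case: w Hw => [|c w] //= /andP [/negbTE ->].
Qed.

(* [reduce_onto u w] is the reduction of [u ++ w] when [w] is already reduced. *)
Definition reduce_onto u w := foldr (@rcons_red t) w u.

Lemma reduce_onto_cat u v w :
  reduce_onto (u ++ v) w = reduce_onto u (reduce_onto v w).
Proof. exact: foldr_cat. Qed.

Lemma reduced_reduce_onto u w : reduced w -> reduced (reduce_onto u w).
Proof. by elim: u => //= a u IHu Hw; apply/reduced_rcons_red/IHu. Qed.

Lemma reduced_reduce u : reduced (reduce u).
Proof. exact: (@reduced_reduce_onto u [::]). Qed.

Lemma reduce_onto_rcons_red a x w : reduced w ->
  reduce_onto (rcons_red a x) w = rcons_red a (reduce_onto x w).
Proof.
move=> Hw; case: x => [|b x] //=; case: ifP => //= /eqP ->.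
by rewrite rcons_redK //; apply: reduced_reduce_onto.
Qed.

Lemma reduce_onto_reduce u w : reduced w -> reduce_onto (reduce u) w = reduce_onto u w.
Proof. by move=> Hw; elim: u => //= a u IHu; rewrite reduce_onto_rcons_red // IHu. Qed.

Lemma reduce_cat u v : reduce (u ++ v) = reduce_onto (reduce u) (reduce v).
Proof.
by rewrite reduce_onto_reduce ?reduced_reduce // -reduce_onto_cat.
Qed.

Lemma winv_cat u v : winv (u ++ v) = winv v ++ winv u.
Proof. by rewrite /winv map_cat rev_cat. Qed.

Lemma winvK u : winv (winv u) = u.
Proof.
rewrite /winv map_rev revK -map_comp -[RHS]map_id.
by apply: eq_map => a /=; rewrite linvK.
Qed.

Lemma winv_cons a u : winv (a :: u) = winv u ++ [:: linv a].
Proof. by rewrite /winv /= rev_cons cats1. Qed.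

Lemma reduce_onto_mulV u w : reduced w -> reduce_onto (u ++ winv u) w = w.
Proof.
elim: u w => [|a u IHu] w Hw //=.
rewrite winv_cons catA reduce_onto_cat IHu /=; first by rewrite rcons_redK.
exact: reduced_rcons_red.
Qed.

Lemma weq_refl u : weq u u. Proof. by []. Qed.
Lemma weq_sym u v : weq u v -> weq v u. Proof. by rewrite /weq => ->. Qed.
Lemma weq_trans u v w : weq u v -> weq v w -> weq u w.
Proof. by rewrite /weq => -> ->. Qed.

Lemma weq_cat u u' v v' : weq u u' -> weq v v' -> weq (u ++ v) (u' ++ v').
Proof. by rewrite /weq !reduce_cat => -> ->. Qed.

Lemma weq_mulV u : weq (u ++ winv u) [::].
Proof.
rewrite /weq reduce_cat reduce_onto_reduce ?reduced_reduce //.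
by rewrite -reduce_onto_cat reduce_onto_mulV.
Qed.

Lemma weq_Vmul u : weq (winv u ++ u) [::].
Proof. by rewrite -{2}(winvK u); apply: weq_mulV. Qed.

Lemma weq_inv u v : weq u v -> weq (winv u) (winv v).
Proof.
move=> Euv; apply: (@weq_trans _ (winv u ++ v ++ winv v)).
  by rewrite -{1}[winv u]cats0; apply/weq_cat/weq_sym/weq_mulV.
rewrite catA -{2}[winv v]cat0s; apply: weq_cat (weq_refl _).
by apply: weq_trans (weq_Vmul u); apply/weq_cat/weq_sym.
Qed.

End FreeReduction.

Section NormalSubgroups.
Variable t : nat.
Implicit Types (u v w x y g a b c : word t) (X H A : word t -> Prop).

#[export] Instance weq_equiv : Equivalence (@weq t).
Proof. split; [exact: weq_refl | exact: weq_sym | exact: weq_trans]. Qed.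
#[export] Instance cat_weq_proper : Proper (@weq t ==> @weq t ==> @weq t) cat.
Proof. by move=> ? ? ? ? ? ?; apply: weq_cat. Qed.
#[export] Instance winv_weq_proper : Proper (@weq t ==> @weq t) (@winv t).
Proof. by move=> ? ?; apply: weq_inv. Qed.

Lemma weq_mulKV u x : weq (u ++ winv u ++ x) x.
Proof. by rewrite catA (weq_mulV u). Qed.
Lemma weq_mulK u x : weq (winv u ++ u ++ x) x.
Proof. by rewrite catA (weq_Vmul u). Qed.

Definition subgroup H :=
  [/\ H [::], (forall u v, H u -> H v -> H (u ++ v)),
      (forall u, H u -> H (winv u)) & (forall u v, H u -> weq u v -> H v)].

Lemma subgroup_subgen X : subgroup (subgen X).
Proof.
by split; [exact: subgen_one | exact: subgen_mul | exact: subgen_inv | exact: subgen_eq].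
Qed.

Lemma subgen_sub X H : subgroup H -> (forall u, X u -> H u) ->
  forall u, subgen X u -> H u.
Proof.
case=> H1 HM HV Heq HX u; elim=> {u} [u /HX //|//|u v _ Hu _ Hv|u _ Hu|u v _ Hu Euv].
- exact: HM.
- exact: HV.
- exact: Heq Hu Euv.
Qed.

Lemma subgen_mono X Y : (forall u, X u -> Y u) -> forall u, subgen X u -> subgen Y u.
Proof. by move=> XY; apply: subgen_sub (subgroup_subgen Y) _ => u /XY /subgen_base. Qed.

Class normal_sub (N : word t -> Prop) : Prop := {
  normal1 : N [::];
  normalM : forall u v, N u -> N v -> N (u ++ v);
  normalV : forall u, N u -> N (winv u);
  normal_weq : forall u v, N u -> weq u v -> N v;
  normalJ : forall u g, N u -> N (wconj u g) }.

Lemma normal_subgroup N : normal_sub N -> subgroup N.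
Proof.
by move=> HN; split; [exact: normal1 | exact: normalM | exact: normalV | exact: normal_weq].
Qed.

Lemma normal_sub_subgen X :
  (forall u g, X u -> subgen X (wconj u g)) -> normal_sub (subgen X).
Proof.
move=> XJ; constructor; [exact: subgen_one | exact: subgen_mul | exact: subgen_inv
  | exact: subgen_eq |].
move=> u g; elim=> {u} [u /XJ //| |u v _ Hu _ Hv|u _ Hu|u v _ Hu Euv].
- by apply: subgen_eq (subgen_one _) _; rewrite /wconj /= (weq_Vmul g).
- apply: subgen_eq (subgen_mul Hu Hv) _.
  by rewrite /wconj /wmul -!catA weq_mulKV.
- apply: subgen_eq (subgen_inv Hu) _.
  by rewrite /wconj !winv_cat winvK catA.
- by apply: subgen_eq Hu _; rewrite /wconj Euv.
Qed.

Lemma normal_sub_normal_closure X : normal_sub (normal_closure X).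
Proof.
apply: normal_sub_subgen => w h [u [g [Xu ->]]].
apply: subgen_base; exists u, (g ++ h); split=> //.
by rewrite /wconj winv_cat -!catA.
Qed.

Lemma wconj_comm a b g : weq (wconj (wcomm a b) g) (wcomm (wconj a g) (wconj b g)).
Proof. by rewrite /wconj /wcomm !winv_cat !winvK -!catA !weq_mulKV. Qed.

Lemma normal_sub_commsub A : normal_sub A -> normal_sub (commsub A (@Fall t)).
Proof.
move=> HA; apply: normal_sub_subgen => w g [a [b [Aa [_ ->]]]].
apply: subgen_eq _ (weq_sym (wconj_comm a b g)); apply: subgen_base.
by exists (wconj a g), (wconj b g); split=> //; apply: normalJ.
Qed.

Lemma commsub_sub A : normal_sub A -> forall w, commsub A (@Fall t) w -> A w.
Proof.
move=> HA; apply: subgen_sub (normal_subgroup HA) _ => w [a [b [Aa [_ ->]]]].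
by apply: normalM; [apply: normalV | apply: normalJ].
Qed.

Lemma commsub_comm A a b : A a -> commsub A (@Fall t) (wcomm a b).
Proof. by move=> Aa; apply: subgen_base; exists a, b. Qed.

Definition eqmod (N : word t -> Prop) u v := N (u ++ winv v).

Section Quotient.
Variable N : word t -> Prop.
Context {HN : normal_sub N}.

#[export] Instance normal_weq_proper : Proper (@weq t ==> iff) N.
Proof. by move=> u v Euv; split=> Nu; [apply: normal_weq Nu _ | apply: normal_weq Nu _]. Qed.

Lemma normalJV u g : N u -> N (g ++ u ++ winv g).
Proof. by move=> Nu; rewrite -{1}(winvK g); apply: normalJ. Qed.

#[export] Instance eqmod_equiv : Equivalence (eqmod N).
Proof.
split.
- by move=> u; rewrite /eqmod (weq_mulV u); apply: normal1.
- by move=> u v; rewrite /eqmod => /normalV; rewrite winv_cat winvK.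
- move=> u v w; rewrite /eqmod => Huv Hvw.
  by apply: normal_weq (normalM Huv Hvw) _; rewrite -catA weq_mulK.
Qed.

#[export] Instance eqmod_weq_proper : Proper (@weq t ==> @weq t ==> iff) (eqmod N).
Proof. by move=> u u' Eu v v' Ev; rewrite /eqmod Eu Ev. Qed.

Lemma eqmod_catr u v w : eqmod N u v -> eqmod N (u ++ w) (v ++ w).
Proof. by rewrite /eqmod winv_cat -catA weq_mulKV. Qed.

Lemma eqmod_catl u v w : eqmod N u v -> eqmod N (w ++ u) (w ++ v).
Proof. by rewrite /eqmod => /(normalJV w); rewrite winv_cat !catA. Qed.

#[export] Instance cat_eqmod_proper : Proper (eqmod N ==> eqmod N ==> eqmod N) cat.
Proof.
by move=> u u' Eu v v' Ev; apply: transitivity (eqmod_catr _ Eu) (eqmod_catl _ Ev).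
Qed.

#[export] Instance winv_eqmod_proper : Proper (eqmod N ==> eqmod N) (@winv t).
Proof.
move=> u v /(symmetry (R := eqmod N)); rewrite /eqmod winvK => /(normalJV (winv u)).
by rewrite winvK -!catA (weq_Vmul u) cats0.
Qed.

Lemma eqmod1 u : N u <-> eqmod N u [::].
Proof. by rewrite /eqmod cats0. Qed.

#[export] Instance normal_eqmod_proper : Proper (eqmod N ==> iff) N.
Proof. by move=> u v Euv; rewrite !eqmod1 Euv. Qed.

Lemma eqmod_solve x y : eqmod N [::] (x ++ y) -> eqmod N y (winv x).
Proof. by move=> Exy; rewrite -[y]cat0s -(weq_Vmul x) -catA -Exy cats0; reflexivity. Qed.

End Quotient.
End NormalSubgroups.

Section Powers.
Variable t : nat.
Implicit Types (u v w g h c d : word t) (gs : seq (word t)).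

Fixpoint wpow g n : word t := if n is n'.+1 then g ++ wpow g n' else [::].

Lemma wpowD g n m : wpow g (n + m) = wpow g n ++ wpow g m.
Proof. by elim: n => //= n ->; rewrite catA. Qed.

Lemma wpowSr g n : wpow g n.+1 = wpow g n ++ g.
Proof. by rewrite -addn1 wpowD /= cats0. Qed.

Lemma wpowV g n : winv (wpow g n) = wpow (winv g) n.
Proof. by elim: n => //= n IHn; rewrite winv_cat IHn -wpowSr. Qed.

Lemma wpowM g n m : wpow g (n * m) = wpow (wpow g n) m.
Proof. by elim: m => [|m IHm]; rewrite ?muln0 //= mulnS wpowD IHm. Qed.

Lemma wpow_nil n : wpow [::] n = [::].
Proof. by elim: n. Qed.

Lemma gen_powE i n : gen_pow i n = wpow (gen_x i) n.
Proof. by elim: n => //= n ->. Qed.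

Lemma wpow_cancel g h n m : weq (g ++ h) [::] ->
  weq (wpow g n ++ wpow h m) (wpow g (n - m) ++ wpow h (m - n)).
Proof.
move=> Egh; elim: n m => [|n IHn] [|m]; rewrite ?subn0 ?cats0 //=.
rewrite !subSS -IHn -[g ++ wpow g n]/(wpow g n.+1) wpowSr -!catA.
by apply: weq_cat => //; rewrite catA Egh.
Qed.

Definition zpow g (z : Z) : word t :=
  if (0 <=? z)%Z then wpow g (Z.to_nat z) else wpow (winv g) (Z.to_nat (- z)).

Lemma zpow0 g : zpow g 0 = [::].
Proof. by []. Qed.

Lemma zpowD g a b : weq (zpow g a ++ zpow g b) (zpow g (a + b)).
Proof.
have Egg' := weq_mulV g; have Eg'g := weq_Vmul g.
rewrite /zpow; case: (Z.leb_spec 0 a) => Ha; case: (Z.leb_spec 0 b) => Hb.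
- case: (Z.leb_spec 0 (a + b)) => Hab; last lia.
  by rewrite -wpowD; have -> : (Z.to_nat (a + b) = Z.to_nat a + Z.to_nat b)%nat by lia.
- rewrite wpow_cancel //; case: (Z.leb_spec 0 (a + b)) => Hab.
    have -> : (Z.to_nat (- b) - Z.to_nat a = 0)%nat by lia.
    by rewrite cats0; have -> : (Z.to_nat a - Z.to_nat (- b) = Z.to_nat (a + b))%nat by lia.
  have -> : (Z.to_nat a - Z.to_nat (- b) = 0)%nat by lia.
  by have -> : (Z.to_nat (- b) - Z.to_nat a = Z.to_nat (- (a + b)))%nat by lia.
- rewrite wpow_cancel //; case: (Z.leb_spec 0 (a + b)) => Hab.
    have -> : (Z.to_nat (- a) - Z.to_nat b = 0)%nat by lia.
    by have -> : (Z.to_nat b - Z.to_nat (- a) = Z.to_nat (a + b))%nat by lia.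
  have -> : (Z.to_nat b - Z.to_nat (- a) = 0)%nat by lia.
  by rewrite cats0; have -> : (Z.to_nat (- a) - Z.to_nat b = Z.to_nat (- (a + b)))%nat by lia.
- case: (Z.leb_spec 0 (a + b)) => Hab; first lia.
  by rewrite -wpowD; have -> : (Z.to_nat (- (a + b)) = Z.to_nat (- a) + Z.to_nat (- b))%nat by lia.
Qed.

Lemma zpowN g a : weq (winv (zpow g a)) (zpow g (- a)).
Proof.
rewrite /zpow; case: (Z.leb_spec 0 a) => Ha; case: (Z.leb_spec 0 (- a)) => Ha';
  rewrite wpowV.
- by have -> : a = 0%Z by lia.
- by rewrite Z.opp_involutive.
- by rewrite winvK.
- lia.
Qed.

Lemma zpowV g a : weq (zpow (winv g) a) (winv (zpow g a)).
Proof.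
rewrite zpowN /zpow; case: (Z.leb_spec 0 a) => Ha; case: (Z.leb_spec 0 (- a)) => Ha'.
- by have -> : a = 0%Z by lia.
- by rewrite Z.opp_involutive.
- by rewrite winvK.
- lia.
Qed.

Lemma zpowM g (n : nat) z : weq (zpow g (Z.of_nat n * z)) (zpow (wpow g n) z).
Proof.
rewrite /zpow; case: (Z.leb_spec 0 z) => Hz.
  case: (Z.leb_spec 0 (Z.of_nat n * z)) => Hnz; last lia.
  by rewrite -wpowM; have -> : Z.to_nat (Z.of_nat n * z) = (n * Z.to_nat z)%N by lia.
case: n => [|n]; first by rewrite /= wpow_nil.
case: (Z.leb_spec 0 (Z.of_nat n.+1 * z)) => Hnz; first lia.
rewrite wpowV -wpowM.
by have -> : Z.to_nat (- (Z.of_nat n.+1 * z)) = (n.+1 * Z.to_nat (- z))%N by lia.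
Qed.

Section ModuloNormal.
Variable N : word t -> Prop.
Context {HN : normal_sub N}.

Lemma zpow_eqmod g g' z : eqmod N g g' -> eqmod N (zpow g z) (zpow g' z).
Proof.
have wpow_eqmod h h' n : eqmod N h h' -> eqmod N (wpow h n) (wpow h' n).
  by move=> Eh; elim: n => [|n /= ->]; rewrite ?Eh; reflexivity.
by move=> Eg; rewrite /zpow; case: ifP => _; apply: wpow_eqmod; rewrite Eg; reflexivity.
Qed.

Definition central_mod c := forall u, eqmod N (c ++ u) (u ++ c).

Lemma central_mod_cat c d : central_mod c -> central_mod d -> central_mod (c ++ d).
Proof. by move=> Hc Hd u; rewrite -catA (Hd u) catA (Hc u) -catA; reflexivity. Qed.

Lemma central_mod_inv c : central_mod c -> central_mod (winv c).
Proof.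
move=> Hc u; symmetry; have := Hc (winv c ++ u ++ winv c).
by rewrite weq_mulKV -!catA (weq_Vmul c) cats0.
Qed.

Lemma central_mod_zpow c z : central_mod c -> central_mod (zpow c z).
Proof.
have central_mod_wpow d n : central_mod d -> central_mod (wpow d n).
  move=> Hd; elim: n => [|n IHn] /=; last exact: central_mod_cat.
  by move=> u; rewrite cats0; reflexivity.
move=> Hc; rewrite /zpow; case: ifP => _; apply: central_mod_wpow => //.
exact: central_mod_inv.
Qed.

Fixpoint zprod gs (m : nat -> Z) : word t :=
  if gs is g :: gs' then zpow g (m 0%N) ++ zprod gs' (fun k => m k.+1) else [::].

Lemma eq_zprod gs m m' : m =1 m' -> zprod gs m = zprod gs m'.
Proof.
elim: gs m m' => //= g gs IHgs m m' Em.
by rewrite Em; congr (_ ++ _); apply: IHgs => k; apply: Em.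
Qed.

Lemma zprod0 gs : zprod gs (fun _ => 0%Z) = [::].
Proof. by elim: gs => //= g gs ->. Qed.

Section CentralFamily.
Variable gs : seq (word t).
Hypothesis gs_central : forall g, g \in gs -> central_mod g.

Lemma zprodD m m' :
  eqmod N (zprod gs m ++ zprod gs m') (zprod gs (fun k => m k + m' k)%Z).
Proof.
elim: gs gs_central m m' => [|g gs' IHgs] gsC m m' /=; first by reflexivity.
have gsC' h : h \in gs' -> central_mod h by move=> hgs; apply: gsC; rewrite inE hgs orbT.
have gmC : central_mod (zpow g (m' 0%N)).
  by apply: central_mod_zpow; apply: gsC; rewrite inE eqxx.
rewrite -catA (catA (zprod gs' _)) -(gmC (zprod gs' _)) -catA catA zpowD.
by apply: eqmod_catl; apply: IHgs.
Qed.

Lemma zprodN m : eqmod N (winv (zprod gs m)) (zprod gs (fun k => - m k)%Z).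
Proof.
elim: gs gs_central m => [|g gs' IHgs] gsC m /=; first by reflexivity.
have gsC' h : h \in gs' -> central_mod h by move=> hgs; apply: gsC; rewrite inE hgs orbT.
have gmC : central_mod (winv (zpow g (m 0%N))).
  by apply/central_mod_inv/central_mod_zpow; apply: gsC; rewrite inE eqxx.
rewrite winv_cat -(gmC (winv (zprod gs' _))) zpowN; apply: eqmod_catl.
by rewrite (IHgs gsC'); reflexivity.
Qed.

Definition zspan w := exists m, eqmod N w (zprod gs m).

Lemma zspan1 : zspan [::].
Proof. by exists (fun _ => 0%Z); rewrite zprod0; reflexivity. Qed.

Lemma zspan_eqmod u v : zspan u -> eqmod N u v -> zspan v.
Proof. by move=> [m Em] Euv; exists m; rewrite -Euv. Qed.

Lemma zspan_subgroup : subgroup zspan.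
Proof.
split; first exact: zspan1.
- move=> u v [m Em] [m' Em']; exists (fun k => m k + m' k)%Z.
  by rewrite Em Em' zprodD; reflexivity.
- move=> u [m Em]; exists (fun k => - m k)%Z.
  by rewrite Em zprodN; reflexivity.
- by move=> u v Hu Euv; apply: zspan_eqmod Hu _; rewrite Euv; reflexivity.
Qed.

End CentralFamily.

Lemma zspan_mem gs g : g \in gs -> zspan gs g.
Proof.
elim: gs => //= h gs IHgs; rewrite inE => /orP [/eqP ->|/IHgs [m Em]].
  exists (fun k => if k is 0 then 1%Z else 0%Z).
  by rewrite /= zprod0 /zpow /= !cats0; reflexivity.
exists (fun k => if k is k'.+1 then m k' else 0%Z).
by rewrite /= (@eq_zprod gs _ m).
Qed.

End ModuloNormal.
End Powers.

(* (a, b, c) stands for the integer unitriangular matrix [[1, a, c], [0, 1, b], [0, 0, 1]]. *)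
Definition heis := (Z * Z * Z)%type.
Definition heis1 : heis := (0, 0, 0)%Z.
Definition heis_mul (x y : heis) : heis :=
  let: (a, b, c) := x in let: (a', b', c') := y in (a + a', b + b', c + c' + a * b')%Z.
Definition heis_inv (x : heis) : heis :=
  let: (a, b, c) := x in (- a, - b, - c + a * b)%Z.
Definition heis_central (x : heis) := x.1.1 = 0%Z /\ x.1.2 = 0%Z.

Lemma heis_mulA x y z : heis_mul x (heis_mul y z) = heis_mul (heis_mul x y) z.
Proof.
by case: x => [[a b] c]; case: y => [[a' b'] c']; case: z => [[a'' b''] c''] /=;
  congr (_, _, _); ring.
Qed.
Lemma heis_mul1 x : heis_mul heis1 x = x.
Proof. by case: x => [[a b] c] /=; congr (_, _, _); ring. Qed.
Lemma heis_mulr1 x : heis_mul x heis1 = x.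
Proof. by case: x => [[a b] c] /=; congr (_, _, _); ring. Qed.
Lemma heis_mulV x : heis_mul x (heis_inv x) = heis1.
Proof. by case: x => [[a b] c] /=; congr (_, _, _); ring. Qed.
Lemma heis_invM x y : heis_inv (heis_mul x y) = heis_mul (heis_inv y) (heis_inv x).
Proof. by case: x => [[a b] c]; case: y => [[a' b'] c'] /=; congr (_, _, _); ring. Qed.
Lemma heis_invK x : heis_inv (heis_inv x) = x.
Proof. by case: x => [[a b] c] /=; congr (_, _, _); ring. Qed.

Section HeisenbergQuotient.
Variable t : nat.
Variables i j : 'I_t.
Implicit Types (u v w g : word t) (k : 'I_t).

Definition heis_letter (l : letter t) : heis :=
  let s := if l.2 then (-1)%Z else 1%Z in
  if l.1 == i then (s, 0, 0)%Z else if l.1 == j then (0, s, 0)%Z else heis1.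

Definition to_heis w : heis := foldr (fun l x => heis_mul (heis_letter l) x) heis1 w.

Lemma to_heis_cat u v : to_heis (u ++ v) = heis_mul (to_heis u) (to_heis v).
Proof. by elim: u => [|a u /= ->]; rewrite ?heis_mul1 ?heis_mulA. Qed.

Lemma heis_letter_inv l : heis_letter (linv l) = heis_inv (heis_letter l).
Proof. by case: l => k [] /=; rewrite /heis_letter /=; case: (k == i); case: (k == j). Qed.

Lemma to_heis_weq u v : weq u v -> to_heis u = to_heis v.
Proof.
have to_heis_reduce w : to_heis (reduce w) = to_heis w.
  elim: w => [//|a w IHw]; rewrite /= -IHw; case: (reduce w) => [|b w'] //=.
  case: ifP => //= /eqP ->.
  by rewrite heis_letter_inv heis_mulA heis_mulV heis_mul1.
by move=> Euv; rewrite -to_heis_reduce Euv to_heis_reduce.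
Qed.

Lemma to_heis_inv u : to_heis (winv u) = heis_inv (to_heis u).
Proof.
elim: u => [|a u IHu] //=.
by rewrite winv_cons to_heis_cat IHu /= heis_mulr1 heis_letter_inv heis_invM.
Qed.

Lemma to_heis_comm u v : to_heis (wcomm u v) =
  (0, 0, (to_heis u).1.1 * (to_heis v).1.2 - (to_heis v).1.1 * (to_heis u).1.2)%Z.
Proof.
rewrite /wcomm !to_heis_cat !to_heis_inv.
by case: (to_heis u) => [[a b] c]; case: (to_heis v) => [[a' b'] c'] /=; congr (_, _, _); ring.
Qed.

Lemma heis_central_comm u v : heis_central (to_heis (wcomm u v)).
Proof. by rewrite to_heis_comm. Qed.

Lemma to_heis_zpow1 g z : to_heis g = heis1 -> to_heis (zpow g z) = heis1.
Proof.
have to_heis_wpow1 h n : to_heis h = heis1 -> to_heis (wpow h n) = heis1.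
  by move=> Eh; elim: n => //= n IHn; rewrite to_heis_cat Eh IHn.
move=> Eg; rewrite /zpow; case: ifP => _; apply: to_heis_wpow1 => //.
by rewrite to_heis_inv Eg.
Qed.

Lemma to_heis_zpow_central g z : heis_central (to_heis g) ->
  to_heis (zpow g z) = (0, 0, z * (to_heis g).2)%Z.
Proof.
have to_heis_wpow h n : heis_central (to_heis h) ->
    to_heis (wpow h n) = (0, 0, Z.of_nat n * (to_heis h).2)%Z.
  case Eh: (to_heis h) => [[a b] c] [/= Ha Hb]; subst a b.
  elim: n => [|n IHn] //; rewrite [wpow _ _]/= to_heis_cat IHn Eh.
  by cbn [heis_mul fst snd]; congr (_, _, _); lia.
move=> gC; rewrite /zpow; case: (Z.leb_spec 0 z) => Hz.
  by rewrite to_heis_wpow // Z2Nat.id.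
have g'C : heis_central (to_heis (winv g)).
  by move: gC; rewrite to_heis_inv; case: (to_heis g) => [[a b] c] [/= -> ->].
rewrite to_heis_wpow // to_heis_inv Z2Nat.id; last lia.
by move: gC; case: (to_heis g) => [[a b] c] [/= -> ->] /=; congr (_, _, _); ring.
Qed.

Lemma to_heis_gen_pow k n : to_heis (gen_pow k n) =
  if k == i then (Z.of_nat n, 0, 0)%Z else if k == j then (0, Z.of_nat n, 0)%Z else heis1.
Proof.
elim: n => [|n IHn]; first by case: ifP => //; case: ifP.
rewrite [gen_pow _ _]/= -cat1s to_heis_cat IHn /= heis_mulr1 /heis_letter /=.
by case: (k == i); last case: (k == j); rewrite /heis_mul; congr (_, _, _); lia.
Qed.

End HeisenbergQuotient.

Section Commutators.
Variable t : nat.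
Implicit Types (a b c g : word t) (A : word t -> Prop).

Lemma central_mod_commsub A c : normal_sub A -> A c -> central_mod (commsub A (@Fall t)) c.
Proof.
move=> HA Ac u; rewrite /eqmod winv_cat; apply: subgen_base.
exists (winv c), (winv u); split; first exact: normalV.
by split=> //; rewrite /wcomm !winvK -!catA.
Qed.

#[export] Instance wcomm_weq_proper : Proper (@weq t ==> @weq t ==> @weq t) (@wcomm t).
Proof. by move=> a a' Ea b b' Eb; rewrite /wcomm Ea Eb. Qed.

Lemma winv_comm a b : winv (wcomm a b) = wcomm b a.
Proof. by rewrite /wcomm !winv_cat !winvK -!catA. Qed.

Lemma wcomm_commute a b : a ++ b = b ++ a -> weq (wcomm a b) [::].
Proof. by move=> Eab; rewrite /wcomm Eab weq_mulK (weq_Vmul a). Qed.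

Lemma wcomm1 a : weq (wcomm a [::]) [::].
Proof. by apply: wcomm_commute; rewrite cats0. Qed.

Lemma wcomm1l a : weq (wcomm [::] a) [::].
Proof. by apply: wcomm_commute; rewrite cats0. Qed.

End Commutators.

Lemma coprime_mulZ_eq (a b : nat) (x y : Z) : 0 < b -> coprime a b ->
  (Z.of_nat a * x = Z.of_nat b * y)%Z ->
  exists q, x = (Z.of_nat b * q)%Z /\ y = (Z.of_nat a * q)%Z.
Proof.
move=> b_gt0 coprime_ab Exy.
have /dvdnP [q' Eq'] : b %| Z.abs_nat x.
  rewrite -(@Gauss_dvdl _ _ a); last by rewrite coprime_sym.
  by apply/dvdnP; exists (Z.abs_nat y); lia.
exists (if (0 <=? x)%Z then Z.of_nat q' else (- Z.of_nat q')%Z).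
have Ex : x = (Z.of_nat b * (if (0 <=? x)%Z then Z.of_nat q' else (- Z.of_nat q')%Z))%Z.
  by case: (Z.leb_spec 0 x); lia.
split=> //; apply: (@Z.mul_reg_l _ _ (Z.of_nat b)); first lia.
by rewrite -Exy {1}Ex; ring.
Qed.

Section Relators.
Variable t : nat.
Variable r : 'I_t -> nat.
Hypothesis r_gt0 : forall i, 0 < r i.
Hypothesis r_coprime : forall i j, i != j -> coprime (r i) (r j).
Implicit Types (u v w g f s a b : word t) (i j k : 'I_t).

Definition relS := Srel r.
Definition rhoS2 := commsub relS (@Fall t).
Definition rhoS3 := commsub rhoS2 (@Fall t).
Definition gamma2 := commsub (@Fall t) (@Fall t).
Definition gamma3 := commsub gamma2 (@Fall t).

#[local] Instance normal_sub_relS : normal_sub relS := normal_sub_normal_closure _.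
#[local] Instance normal_sub_rhoS2 : normal_sub rhoS2 := normal_sub_commsub _.
#[local] Instance normal_sub_rhoS3 : normal_sub rhoS3 := normal_sub_commsub _.

Lemma rhoS2_sub_relS w : rhoS2 w -> relS w. Proof. exact: commsub_sub. Qed.
Lemma rhoS3_sub_rhoS2 w : rhoS3 w -> rhoS2 w. Proof. exact: commsub_sub. Qed.
Lemma rhoS2_sub_gamma2 w : rhoS2 w -> gamma2 w.
Proof. by apply: subgen_mono => u [a [b [_ [_ ->]]]]; exists a, b. Qed.
Lemma rhoS3_sub_gamma3 w : rhoS3 w -> gamma3 w.
Proof.
apply: subgen_mono => u [a [b [rhoS2a [_ ->]]]]; exists a, b.
by split=> //; apply: rhoS2_sub_gamma2.
Qed.
Lemma gamma3_sub_gamma2 w : gamma3 w -> gamma2 w.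
Proof. by apply: subgen_mono => u [a [b [_ [_ ->]]]]; exists a, b. Qed.

Lemma heis_central_gamma2 i j w : gamma2 w -> heis_central (to_heis i j w).
Proof.
move: w; apply: (@subgen_sub _ _ (fun w => heis_central (to_heis i j w)))
  => [|u [a [b [_ [_ ->]]]]]; last exact: heis_central_comm.
split=> // [u v|u|u v _ /(to_heis_weq i j) <- //].
- rewrite /heis_central to_heis_cat.
  by case: (to_heis i j u) => [[? ?] ?]; case: (to_heis i j v) => [[? ?] ?] [/= -> ->] [-> ->].
- by rewrite /heis_central to_heis_inv; case: (to_heis i j u) => [[? ?] ?] [/= -> ->].
Qed.

Lemma to_heis_gamma3 i j w : gamma3 w -> to_heis i j w = heis1.
Proof.
move: w; apply: (@subgen_sub _ _ (fun w => to_heis i j w = heis1))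
  => [|u [a [b [gamma2a [_ ->]]]]].
  split=> // [u v|u|u v _ /(to_heis_weq i j) <- //].
  - by rewrite to_heis_cat => -> ->.
  - by rewrite to_heis_inv => ->.
rewrite to_heis_comm; case: (heis_central_gamma2 i j gamma2a) => -> ->.
by congr (_, _, _); ring.
Qed.

Definition relator i := gen_pow i (r i).

Lemma relS_relator i : relS (relator i).
Proof.
apply: subgen_eq (_ : relS (wconj (relator i) [::])) _; last by rewrite /wconj /= cats0.
by apply: subgen_base; exists (relator i), [::]; split=> //; exists i.
Qed.

Definition relators := [seq relator i | i <- enum 'I_t].

Lemma relators_central g : g \in relators -> central_mod rhoS2 g.
Proof. by case/mapP => i _ ->; apply/central_mod_commsub/relS_relator. Qed.

Lemma relS_sub_zspan_relators w : relS w -> zspan rhoS2 relators w.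
Proof.
move: w; apply: subgen_sub; first exact: zspan_subgroup relators_central.
move=> u [x [g [[i ->] ->]]].
apply: zspan_eqmod (zspan_mem (N := rhoS2) (map_f relator (mem_enum _ i))) _.
rewrite /eqmod /wconj !winv_cat winvK -!catA; apply: subgen_base.
exists (winv (relator i)), g; split; first by apply: normalV; apply: relS_relator.
by split=> //; rewrite /wcomm winvK.
Qed.

(* With i = j = k, the first coordinate of [to_heis] counts the exponent sum of x_k. *)
Definition expsum j w := (to_heis j j w).1.1.

Lemma expsum_cat j u v : expsum j (u ++ v) = (expsum j u + expsum j v)%Z.
Proof.
rewrite /expsum to_heis_cat.
by case: (to_heis j j u) => [[? ?] ?]; case: (to_heis j j v) => [[? ?] ?].
Qed.

Lemma expsum_inv j u : expsum j (winv u) = (- expsum j u)%Z.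
Proof. by rewrite /expsum to_heis_inv; case: (to_heis j j u) => [[? ?] ?]. Qed.

Lemma expsum_gamma2 j w : gamma2 w -> expsum j w = 0%Z.
Proof. by case/(heis_central_gamma2 j j). Qed.

Lemma expsum_zpow_relator j i z :
  expsum j (zpow (relator i) z) = if i == j then (z * Z.of_nat (r i))%Z else 0%Z.
Proof.
have expsum_wpow g n : expsum j (wpow g n) = (Z.of_nat n * expsum j g)%Z.
  elim: n => [|n IHn] //; rewrite [wpow _ _]/= expsum_cat IHn; lia.
have expsum_relator : expsum j (relator i) = if i == j then Z.of_nat (r i) else 0%Z.
  by rewrite /expsum /relator to_heis_gen_pow; case: (i == j).
rewrite /zpow; case: (Z.leb_spec 0 z) => Hz; rewrite expsum_wpow.
  by rewrite expsum_relator Z2Nat.id //; case: (i == j); lia.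
by rewrite expsum_inv expsum_relator Z2Nat.id; case: (i == j); lia.
Qed.

Lemma expsum_zprod_relators_notin j (l : seq 'I_t) m : j \notin l ->
  expsum j (zprod [seq relator i | i <- l] m) = 0%Z.
Proof.
elim: l m => [|i l IHl] m //=; rewrite inE negb_or => /andP [j_neq_i j_notin_l].
by rewrite expsum_cat expsum_zpow_relator IHl // eq_sym (negbTE j_neq_i).
Qed.

Lemma zprod_relators_expsum0 (l : seq 'I_t) m : uniq l ->
  (forall j, j \in l -> expsum j (zprod [seq relator i | i <- l] m) = 0%Z) ->
  zprod [seq relator i | i <- l] m = [::].
Proof.
elim: l m => [|i l IHl] m //= /andP [i_notin_l uniq_l] expsum0.
have m0 : m 0%N = 0%Z.
  have := expsum0 i (mem_head _ _).
  rewrite /= expsum_cat expsum_zpow_relator eqxx expsum_zprod_relators_notin //.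
  by have := r_gt0 i; nia.
rewrite m0 zpow0 cat0s; apply: IHl => // j j_in_l.
by have := expsum0 j; rewrite inE j_in_l orbT /= m0 zpow0 cat0s; apply.
Qed.

Theorem relS_cap_gamma2 w : relS w /\ gamma2 w <-> rhoS2 w.
Proof.
split=> [[Sw gamma2w]|rhoS2w]; last by split; [apply: rhoS2_sub_relS | apply: rhoS2_sub_gamma2].
have [m Em] := relS_sub_zspan_relators Sw.
suff E : zprod relators m = [::] by move: Em; rewrite E -eqmod1.
apply: zprod_relators_expsum0 => [|j _]; first exact: enum_uniq.
have := expsum_gamma2 j (rhoS2_sub_gamma2 Em).
by rewrite expsum_cat expsum_inv (expsum_gamma2 j gamma2w) /relators; lia.
Qed.

Lemma comm_relS_rhoS2 s f : relS s -> rhoS2 (wcomm s f).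
Proof. exact: commsub_comm. Qed.

Lemma conj_rhoS2 c g : rhoS2 c -> eqmod rhoS3 (wconj c g) c.
Proof.
move=> rhoS2c; rewrite /wconj (central_mod_commsub _ rhoS2c g) weq_mulK; reflexivity.
Qed.

Lemma comm_mulr s f g : relS s -> eqmod rhoS3 (wcomm s (f ++ g)) (wcomm s f ++ wcomm s g).
Proof.
move=> Ss; have -> : weq (wcomm s (f ++ g)) (wcomm s g ++ wconj (wcomm s f) g).
  by rewrite /wcomm /wconj !winv_cat -!catA !weq_mulKV.
rewrite (conj_rhoS2 g (comm_relS_rhoS2 f Ss)).
by rewrite (central_mod_commsub _ (comm_relS_rhoS2 g Ss)); reflexivity.
Qed.

Lemma comm_Vr s f : relS s -> eqmod rhoS3 (wcomm s (winv f)) (winv (wcomm s f)).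
Proof.
by move=> Ss; apply: eqmod_solve; rewrite -comm_mulr // (weq_mulV f) wcomm1; reflexivity.
Qed.

Lemma comm_mull s s' f : relS s -> relS s' ->
  eqmod rhoS3 (wcomm (s ++ s') f) (wcomm s f ++ wcomm s' f).
Proof.
move=> Ss Ss'; have -> : weq (wcomm (s ++ s') f) (wconj (wcomm s f) s' ++ wcomm s' f).
  by rewrite /wcomm /wconj !winv_cat -!catA !weq_mulKV.
by rewrite (conj_rhoS2 s' (comm_relS_rhoS2 f Ss)); reflexivity.
Qed.

Lemma comm_Vl s f : relS s -> eqmod rhoS3 (wcomm (winv s) f) (winv (wcomm s f)).
Proof.
move=> Ss; apply: eqmod_solve; rewrite -comm_mull //; last exact: normalV.
by rewrite (weq_mulV s) wcomm1l; reflexivity.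
Qed.

Lemma comm_conjl s g f : relS s -> eqmod rhoS3 (wcomm (wconj s g) f) (wcomm s f).
Proof.
move=> Ss; have -> : weq (wconj s g) (s ++ wcomm s g) by rewrite /wcomm weq_mulKV.
rewrite comm_mull //; last exact/rhoS2_sub_relS/comm_relS_rhoS2.
have /eqmod1 -> : rhoS3 (wcomm (wcomm s g) f) by apply/commsub_comm/comm_relS_rhoS2.
by rewrite cats0; reflexivity.
Qed.

Lemma comm_powr s f n : relS s -> eqmod rhoS3 (wpow (wcomm s f) n) (wcomm s (wpow f n)).
Proof.
move=> Ss; elim: n => [|n IHn] /=; first by rewrite wcomm1; reflexivity.
by rewrite comm_mulr // IHn; reflexivity.
Qed.

Definition pairs := [seq p <- enum {: 'I_t * 'I_t} | val p.1 < val p.2].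
Definition pair_gens (p : 'I_t * 'I_t) :=
  [:: wcomm (relator p.1) (gen_x p.2); wcomm (relator p.2) (gen_x p.1)].
Definition comm_gens := flatten [seq pair_gens p | p <- pairs].

Lemma comm_gens_central g : g \in comm_gens -> central_mod rhoS3 g.
Proof.
case/flatten_mapP => p _; rewrite !inE => /orP [] /eqP ->;
  exact/central_mod_commsub/comm_relS_rhoS2/relS_relator.
Qed.

Lemma zspan_comm_relator_gen i j : zspan rhoS3 comm_gens (wcomm (relator i) (gen_x j)).
Proof.
have [<-|i_neq_j] := eqVneq i j.
  apply: zspan_eqmod (zspan1 (N := rhoS3) comm_gens) _.
  rewrite (@wcomm_commute _ (relator i) (gen_x i)); first reflexivity.
  by rewrite /relator gen_powE -[_ ++ wpow _ _]/(wpow _ (r i).+1) wpowSr.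
apply: zspan_mem; apply/flatten_mapP.
case: (ltngtP i j) => [i_lt_j|j_lt_i|/val_inj i_eq_j]; last by rewrite i_eq_j eqxx in i_neq_j.
- by exists (i, j); [rewrite mem_filter /= i_lt_j mem_enum | rewrite inE eqxx].
- by exists (j, i); [rewrite mem_filter /= j_lt_i mem_enum | rewrite !inE eqxx orbT].
Qed.

Lemma zspan_comm_relator i f : zspan rhoS3 comm_gens (wcomm (relator i) f).
Proof.
elim: f => [|[j b] f IHf].
  by apply: zspan_eqmod (zspan1 (N := rhoS3) comm_gens) _; rewrite wcomm1; reflexivity.
have [_ zspanM zspanV _] := zspan_subgroup comm_gens_central.
apply: zspan_eqmod (zspanM _ _ _ IHf) _; last first.
  by symmetry; rewrite -cat1s; apply/comm_mulr/relS_relator.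
case: b; last exact: zspan_comm_relator_gen.
apply: zspan_eqmod (zspanV _ (zspan_comm_relator_gen i j)) _.
by symmetry; apply: (comm_Vr (gen_x j) (relS_relator i)).
Qed.

(* Induction on the generation of [relS]; the bilinearity lemmas need [relS] of the factors,
   so it is carried along. *)
Lemma zspan_comm_relS s f : relS s -> zspan rhoS3 comm_gens (wcomm s f).
Proof.
have [zspan1' zspanM zspanV zspan_weq] := zspan_subgroup comm_gens_central.
move=> Ss; suff : relS s /\ forall f, zspan rhoS3 comm_gens (wcomm s f) by case=> _; apply.
move: s Ss.
apply: (@subgen_sub _ _ (fun s => relS s /\ forall f, zspan rhoS3 comm_gens (wcomm s f))).
  split.
  - split=> [|g]; first exact: normal1.
    by apply: zspan_weq zspan1' _; rewrite wcomm1l.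
  - move=> u v [Su zspan_u] [Sv zspan_v]; split=> [|g]; first exact: normalM.
    by apply: zspan_eqmod (zspanM _ _ (zspan_u g) (zspan_v g)) _; symmetry; apply: comm_mull.
  - move=> u [Su zspan_u]; split=> [|g]; first exact: normalV.
    by apply: zspan_eqmod (zspanV _ (zspan_u g)) _; symmetry; apply: comm_Vl.
  - move=> u v [Su zspan_u] Euv; split=> [|g]; first exact: normal_weq Su Euv.
    by apply: zspan_weq (zspan_u g) _; rewrite Euv.
move=> u [x [g [[i ->] ->]]]; split.
  by apply: subgen_base; exists (relator i), g; split=> //; exists i.
move=> h; apply: zspan_eqmod (zspan_comm_relator i h) _.
by symmetry; apply/comm_conjl/relS_relator.
Qed.

Lemma rhoS2_sub_zspan w : rhoS2 w -> zspan rhoS3 comm_gens w.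
Proof.
move: w; apply: subgen_sub; first exact: zspan_subgroup comm_gens_central.
by move=> u [a [b [Sa [_ ->]]]]; apply: zspan_comm_relS.
Qed.

Lemma to_heis_comm_relator_gen i j k (l : 'I_t) : i != j ->
  to_heis i j (wcomm (relator k) (gen_x l)) =
  (0, 0, if (k == i) && (l == j) then Z.of_nat (r k)
         else if (k == j) && (l == i) then - Z.of_nat (r k) else 0)%Z.
Proof.
move=> i_neq_j; rewrite to_heis_comm /relator -[gen_x l]/(gen_pow l 1) !to_heis_gen_pow.
case: (k =P i) => [->|_]; case: (l =P i) => [->|_]; rewrite ?(negbTE i_neq_j) ?eqxx;
  by case: (k == j); case: (l == j); congr (_, _, _); cbn [fst snd heis1 andb]; lia.
Qed.

Lemma to_heis_pair_gens_other (p q : 'I_t * 'I_t) : p \in pairs -> q \in pairs -> q != p ->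
  forall g, g \in pair_gens q -> to_heis p.1 p.2 g = heis1.
Proof.
case: p q => [i j] [k l]; rewrite !mem_filter /= => /andP [i_lt_j _] /andP [k_lt_l _] qp.
have i_neq_j : i != j by rewrite -val_eqE neq_ltn i_lt_j.
move=> g; rewrite !inE => /orP [] /eqP ->; rewrite to_heis_comm_relator_gen //.
all: case: (k =P i) => [Ek|_]; case: (l =P j) => [El|_]; case: (k =P j) => [Ek'|_];
  case: (l =P i) => [El'|_] //=; subst.
all: by [rewrite eqxx in qp | move: i_lt_j k_lt_l; lia].
Qed.

Lemma to_heis_zprod1 i j gs m : (forall g, g \in gs -> to_heis i j g = heis1) ->
  to_heis i j (zprod gs m) = heis1.
Proof.
elim: gs m => [|g gs IHgs] m //= gs1.
rewrite to_heis_cat to_heis_zpow1 ?IHgs ?heis_mul1 // => [h h_in|]; apply: gs1.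
  by rewrite inE h_in orbT.
by rewrite inE eqxx.
Qed.

(* Coprimality turns the single linear relation on the exponents into a multiple of
   [[x_i^r_i, x_j^r_j]], whose two bilinear expansions cancel modulo [rhoS3]. *)
Lemma pair_relation_rhoS3 i j m0 m1 : i != j ->
  (Z.of_nat (r i) * m0 = Z.of_nat (r j) * m1)%Z ->
  rhoS3 (zpow (wcomm (relator i) (gen_x j)) m0 ++ zpow (wcomm (relator j) (gen_x i)) m1).
Proof.
move=> i_neq_j Em; have [q [-> ->]] := coprime_mulZ_eq (r_gt0 j) (r_coprime i_neq_j) Em.
set C := wcomm (relator i) (relator j).
have -> : eqmod rhoS3 (zpow (wcomm (relator i) (gen_x j)) (Z.of_nat (r j) * q)) (zpow C q).
  rewrite zpowM; apply: zpow_eqmod.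
  by rewrite (comm_powr _ _ (relS_relator i)) -gen_powE; reflexivity.
have -> : eqmod rhoS3 (zpow (wcomm (relator j) (gen_x i)) (Z.of_nat (r i) * q)) (winv (zpow C q)).
  rewrite zpowM -zpowV; apply: zpow_eqmod.
  by rewrite (comm_powr _ _ (relS_relator j)) -gen_powE /C winv_comm; reflexivity.
by rewrite (weq_mulV (zpow C q)); apply: normal1.
Qed.

Lemma zprod_pair_gens_rhoS3 (Q : seq ('I_t * 'I_t)) m : uniq Q -> {subset Q <= pairs} ->
  let w := zprod (flatten [seq pair_gens p | p <- Q]) m in
  (forall p, p \in Q -> to_heis p.1 p.2 w = heis1) -> rhoS3 w.
Proof.
elim: Q m => [|p Q IHQ] m /=; first by move=> *; apply: normal1.
case/andP=> p_notin_Q uniq_Q pQ_pairs w_to_heis.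
set R := zprod (flatten [seq pair_gens p | p <- Q]) (fun k : nat => m k.+2).
have Q_pairs : {subset Q <= pairs} by move=> q q_in_Q; apply: pQ_pairs; rewrite inE q_in_Q orbT.
have p_pair : p \in pairs by apply: pQ_pairs; rewrite inE eqxx.
have other_pairs q : q \in Q -> forall g, g \in pair_gens q -> to_heis p.1 p.2 g = heis1.
  move=> q_in_Q; apply: to_heis_pair_gens_other p_pair (Q_pairs q q_in_Q) _.
  by apply/eqP => q_eq_p; rewrite -q_eq_p q_in_Q in p_notin_Q.
have R_to_heis : to_heis p.1 p.2 R = heis1.
  by apply: to_heis_zprod1 => g /flatten_mapP [q q_in_Q]; apply: other_pairs.
have p1_neq_p2 : p.1 != p.2.
  by move: p_pair; rewrite mem_filter -val_eqE => /andP [/ltn_eqF ->].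
rewrite catA; apply: normalM.
  apply: pair_relation_rhoS3 => //.
  have := w_to_heis p (mem_head _ _); rewrite catA to_heis_cat R_to_heis heis_mulr1.
  rewrite to_heis_cat !to_heis_zpow_central; try exact: heis_central_comm.
  rewrite !to_heis_comm_relator_gen // !eqxx [p.2 == _]eq_sym (negbTE p1_neq_p2) /=.
  by case; lia.
apply: IHQ => // q q_in_Q.
have q_neq_p : p != q by apply/eqP => p_eq_q; rewrite p_eq_q q_in_Q in p_notin_Q.
have := w_to_heis q; rewrite inE q_in_Q orbT => /(_ isT).
rewrite !to_heis_cat !to_heis_zpow1 ?heis_mul1 //.
all: by apply: (to_heis_pair_gens_other (Q_pairs q q_in_Q) p_pair q_neq_p);
  rewrite !inE eqxx ?orbT.
Qed.

Theorem relS_cap_gamma3 w : relS w /\ gamma3 w <-> rhoS3 w.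
Proof.
split=> [[Sw gamma3w]|rhoS3w]; last first.
  by split; [apply/rhoS2_sub_relS/rhoS3_sub_rhoS2 | apply: rhoS3_sub_gamma3].
have rhoS2w : rhoS2 w by apply/relS_cap_gamma2; split=> //; apply: gamma3_sub_gamma2.
have [m Em] := rhoS2_sub_zspan rhoS2w.
suff : rhoS3 (zprod comm_gens m) by rewrite -Em.
apply: zprod_pair_gens_rhoS3 => [|//|p _]; first exact/filter_uniq/enum_uniq.
have := to_heis_gamma3 p.1 p.2 (rhoS3_sub_gamma3 Em).
rewrite to_heis_cat to_heis_inv (to_heis_gamma3 _ _ gamma3w) heis_mul1 => E.
by rewrite -(heis_invK (to_heis _ _ _)) E.
Qed.

Theorem rhoS2_cap_gamma3 w : rhoS2 w /\ gamma3 w <-> rhoS3 w.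
Proof.
rewrite -relS_cap_gamma3; split=> [[/rhoS2_sub_relS Sw gamma3w] //|[Sw gamma3w]].
by split=> //; apply/relS_cap_gamma2; split=> //; apply: gamma3_sub_gamma2.
Qed.

End Relators.

Theorem corollary2p2 (t : nat) (r : 'I_t -> nat) :
  1 <= t ->
  (forall i, 0 < r i) ->
  (forall i j, i != j -> coprime (r i) (r j)) ->
  let S := Srel r in
  set_eq (set_cap S (@gamma t 2)) (rho S 2) /\
  set_eq (set_cap S (@gamma t 3)) (rho S 3) /\
  set_eq (set_cap (rho S 2) (@gamma t 3)) (rho S 3).
Proof.
move=> _ r_gt0 r_coprime S.
split; [|split] => w.
- exact: relS_cap_gamma2 r_gt0 w.
- exact: relS_cap_gamma3 r_gt0 r_coprime w.
- exact: rhoS2_cap_gamma3 r_gt0 r_coprime w.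
Qed.
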